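(* Let $A\in\mathbb R^{N\times N}$ be a $Z$-matrix and let $p<1$. Then the equation $Ax=x^{p}$ has a solution $x\in\mathbb R^N$ with $x>0$ if and only if $A$ is a non-singular $M$-matrix.
   Context: Inequalities between vectors/matrices are componentwise; for $x\in(0,\infty)^N$, $x^p:=(x_1^p,\dots,x_N^p)^\top$. A matrix $A\in\mathbb R^{N\times N}$ is a $Z$-matrix if $A_{ij}\le 0$ for all $i\neq j$. A $Z$-matrix $A$ is an $M$-matrix if $A=s\,\mathrm{Id}-B$ for some matrix $B\ge 0$ and some $s\in\mathbb R$ with $s\ge\rho(B)$, where $\rho(B)$ is the spectral radius of $B$; it is a non-singular $M$-matrix if in addition it is invertible. *)

From mathcomp Require Import all_boot all_algebra.
From mathcomp Require Import all_classical all_reals all_analysis.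
From mathcomp Require Import complex.
Set Implicit Arguments. Unset Strict Implicit. Unset Printing Implicit Defensive.
Import GRing.Theory Num.Theory.
Local Open Scope ring_scope.
Local Open Scope classical_set_scope.

Definition Zmatrix (R : realType) (n : nat) (A : 'M[R]_n) : Prop :=
  forall i j : 'I_n, i != j -> A i j <= 0.

Definition nonneg_mx (R : realType) (m n : nat) (B : 'M[R]_(m, n)) : Prop :=
  forall i j, 0 <= B i j.

(* Spectral radius: the largest modulus of a complex eigenvalue, i.e. of a
   complex root of the characteristic polynomial (0 if n = 0). *)
Definition spectral_radius (R : realType) (n : nat) (B : 'M[R]_n) : R :=
  sup [set Normc.normc l | l in
        [set l : R[i] | root (map_poly (real_complex R) (char_poly B)) l]].

Definition Mmatrix (R : realType) (n : nat) (A : 'M[R]_n) : Prop :=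
  Zmatrix A /\
  exists (s : R) (B : 'M[R]_n),
    nonneg_mx B /\ spectral_radius B <= s /\ A = s%:M - B.

Definition nonsingular_Mmatrix (R : realType) (n : nat) (A : 'M[R]_n) : Prop :=
  Mmatrix A /\ A \in unitmx.

Definition vpow (R : realType) (n : nat) (x : 'cV[R]_n) (p : R) : 'cV[R]_n :=
  \col_i (x i 0 `^ p).

From mathcomp Require Import all_boot all_order all_algebra.
From mathcomp Require Import all_classical all_reals all_analysis.
From mathcomp Require Import complex lra.
Set Implicit Arguments. Unset Strict Implicit. Unset Printing Implicit Defensive.
Import Order.TTheory GRing.Theory Num.Theory.
Import numFieldNormedType.Exports.
Local Open Scope classical_set_scope.
Local Open Scope ring_scope.

(* Both sides are equivalent to semipositivity of A: A z > 0 for some z > 0.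
   A positive solution of A x = x^p is such a z.  Given one, B := s - A >= 0
   for large s satisfies B z < s z, which bounds the eigenvalues of B by s, and
   a Z-matrix with A z > 0 is monotone (A y >= 0 implies y >= 0), hence
   invertible.  Conversely, if A = s - B with B >= 0 and s >= rho(B) is
   invertible, the set of u for which u - B is semipositive is open and upward
   closed, and its infimum is an eigenvalue of B, so A itself is semipositive.
   Finally, for p < 1 a small multiple of z is a subsolution and a large one a
   strict supersolution of A x = x^p; since A is a Z-matrix, the componentwise
   supremum of the subsolutions lying between them solves the equation. *)

Section ContinuousBall.
Variable R : realType.
Implicit Types (f : R -> R) (x y : R).

Lemma continuous_gt_ball f x y : {for x, continuous f} -> y < f x ->
  exists2 e : R, 0 < e & forall t, `|x - t| < e -> y < f t.
Proof.
move=> /cvgr_gt /[apply] /nbhs_normP [e e0 fe].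
by exists e => // t xt; apply: fe.
Qed.

Lemma continuous_lt_ball f x y : {for x, continuous f} -> f x < y ->
  exists2 e : R, 0 < e & forall t, `|x - t| < e -> f t < y.
Proof.
move=> /cvgr_lt /[apply] /nbhs_normP [e e0 fe].
by exists e => // t xt; apply: fe.
Qed.

Lemma powR_continuous (p x : R) : 0 < x -> {for x, continuous (fun t : R => t `^ p)}.
Proof.
move=> x0; apply: differentiable_continuous.
by apply/derivable1_diffP; apply: derivable_powR; rewrite in_itv /= andbT.
Qed.

End ContinuousBall.

Lemma eigenvalue_det (F : fieldType) n (M : 'M[F]_n) a :
  eigenvalue M a = (\det (a%:M - M) == 0).
Proof.
apply/eigenvalueP/det0P => [[v Mv v_nz] | [v v_nz Mv]]; exists v => //.
  by rewrite mulmxBr Mv mul_mx_scalar subrr.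
by apply/eqP; rewrite -mul_mx_scalar eq_sym -subr_eq0 -mulmxBr Mv.
Qed.

Lemma eigenvalue_tr (F : fieldType) n (M : 'M[F]_n) a :
  eigenvalue M^T a = eigenvalue M a.
Proof. by rewrite !eigenvalue_det -det_tr linearB /= tr_scalar_mx trmxK. Qed.

Section SpectralRadius.
Variables (R : realType) (N : nat).
Implicit Types (B : 'M[R]_N) (s : R).
Local Notation normc := (@Normc.normc R).
Local Notation croot B l := (root (map_poly (real_complex R) (char_poly B)) l).

Lemma normc_ge0 (z : R[i]) : 0 <= normc z.
Proof. by case: z => a b; exact: sqrtr_ge0. Qed.

Lemma normc_real (r : R) : 0 <= r -> normc (real_complex R r) = r.
Proof. by move=> r0; rewrite /Normc.normc /= expr0n /= addr0 sqrtr_sqr ger0_norm. Qed.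

Lemma normc_sum (I : finType) (F : I -> R[i]) :
  normc (\sum_i F i) <= \sum_i normc (F i).
Proof.
apply: (big_ind2 (fun a b => normc a <= b)) => //; first by rewrite Normc.normc0.
by move=> a1 a2 b1 b2 h1 h2; apply: le_trans (le_normcD _ _) (lerD h1 h2).
Qed.

Lemma roots_normc_bounded (P : {poly R[i]}) : P != 0 ->
  exists M : R, forall l, root P l -> normc l <= M.
Proof.
move=> P0; have [r ->] := closed_field_poly_normal P.
exists (\sum_(z <- r) normc z) => l.
rewrite rootZ ?lead_coef_eq0 // root_prod_XsubC.
elim: r => [|a r IH] //=; rewrite in_cons big_cons => /orP [/eqP ->|lr].
  by rewrite lerDl sumr_ge0 // => z _; exact: normc_ge0.
by rewrite (le_trans (IH lr)) // lerDr normc_ge0.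
Qed.

Lemma root_char_le_spectral_radius B l : croot B l -> normc l <= spectral_radius B.
Proof.
move=> Bl; apply: ub_le_sup; last by exists l.
have P0 : map_poly (real_complex R) (char_poly B) != 0.
  exact: monic_neq0 (monic_map _ (char_poly_monic B)).
have [M hM] := roots_normc_bounded P0.
by exists M => _ [l' l'B <-]; exact: hM.
Qed.

Lemma singular_shift_le_spectral_radius B (u : R) :
  0 <= u -> u%:M - B \notin unitmx -> u <= spectral_radius B.
Proof.
move=> u0; rewrite unitmxE unitfE negbK => detu.
have : eigenvalue B u by rewrite eigenvalue_det.
rewrite eigenvalue_root_char => /(rmorph_root (real_complex R)).
by move=> /root_char_le_spectral_radius; rewrite normc_real.
Qed.

Lemma spectral_radius_le B s : 0 <= s ->
  (forall l, croot B l -> normc l <= s) -> spectral_radius B <= s.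
Proof.
move=> s0 Bs; rewrite /spectral_radius.
have [[y Sy]|S0] := pselect ([set normc l | l in [set l | croot B l]] !=set0).
  by apply: ge_sup => [|_ [l Bl <-]]; [exists y | exact: Bs].
suff -> : [set normc l | l in [set l | croot B l]] = set0 by rewrite sup0.
by apply/seteqP; split => // y Sy; apply: S0; exists y.
Qed.

(* Collatz-Wielandt bound: test the eigenvector [v] of [B^T] at the coordinate
   maximising [|v_k| / x_k]. *)
Lemma root_char_normc_lt B (x : 'cV[R]_N) s :
  nonneg_mx B -> (forall i, 0 < x i 0) -> (forall i, (B *m x) i 0 < s * x i 0) ->
  forall l, croot B l -> normc l < s.
Proof.
move=> B0 xp Bx l; rewrite map_char_poly -eigenvalue_root_char -eigenvalue_tr.
case/eigenvalueP => v Bv v_nz.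
pose w k := normc (v 0 k).
have [j0 _|N0] := pickP (fun k : 'I_N => true); last first.
  by case/negP: v_nz; apply/eqP/matrixP => a b; have := N0 b.
have [j _ jmax] := @arg_maxP _ R _ j0 xpredT (fun k : 'I_N => w k / x k 0) isT.
set m := w j / x j 0 in jmax.
have wk k : w k <= m * x k 0 by rewrite -ler_pdivrMr //; exact: jmax.
have m0 : 0 < m.
  rewrite ltNge; apply/negP => m0; case/negP: v_nz; apply/eqP/matrixP => a b.
  rewrite (ord1 a) mxE; apply: Normc.eq0_normc; apply/le_anti.
  by rewrite normc_ge0 andbT (le_trans (wk b)) // mulr_le0_ge0 // ltW.
have wj : w j = m * x j 0 by rewrite /m divfK ?gt_eqF.
have lw : normc l * w j <= m * (B *m x) j 0.
  rewrite /w -Normc.normcM.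
  have -> : l * v 0 j = (v *m (map_mx (real_complex R) B)^T) 0 j by rewrite Bv mxE.
  rewrite mxE; apply: le_trans (normc_sum _) _.
  rewrite mxE mulr_sumr; apply: ler_sum => k _.
  rewrite !mxE Normc.normcM normc_real // mulrCA [X in X <= _]mulrC.
  by apply: ler_wpM2l; [exact: B0 | exact: wk].
have : normc l * w j < s * w j.
  by apply: le_lt_trans lw _; rewrite wj mulrCA ltr_pM2l.
by rewrite ltr_pM2r // wj mulr_gt0.
Qed.

End SpectralRadius.

Section Zmatrix.
Variables (R : realType) (N : nat).
Implicit Types (A C : 'M[R]_N) (x y : 'cV[R]_N).

(* We ask for a positive vector [x]; the usual definition allows [x >= 0]. *)
Definition semipositive A : Prop :=
  exists2 x : 'cV[R]_N, (forall i, 0 < x i 0) & (forall i, 0 < (A *m x) i 0).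

Lemma mulmx_diag_offdiag A x i :
  (A *m x) i 0 = A i i * x i 0 + \sum_(j | j != i) A i j * x j 0.
Proof. by rewrite mxE (bigD1 i). Qed.

Lemma mulmxD_scalarE A (d : R) x i :
  ((A + d%:M) *m x) i 0 = (A *m x) i 0 + d * x i 0.
Proof. by rewrite mulmxDl mul_scalar_mx [LHS]mxE [X in _ + X]mxE. Qed.

Lemma mulmx_scalarBE A (d : R) x i :
  ((d%:M - A) *m x) i 0 = d * x i 0 - (A *m x) i 0.
Proof. by rewrite addrC mulmxD_scalarE mulNmx mxE addrC. Qed.

Lemma Zmatrix_offdiag_le A x y i : Zmatrix A ->
  (forall j, j != i -> x j 0 <= y j 0) ->
  \sum_(j | j != i) A i j * y j 0 <= \sum_(j | j != i) A i j * x j 0.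
Proof.
move=> ZA xy; apply: ler_sum => j ji; apply: ler_wnM2l; last exact: xy.
by apply: ZA; rewrite eq_sym.
Qed.

Lemma ZmatrixD_scalar A (d : R) : Zmatrix A -> Zmatrix (A + d%:M).
Proof. by move=> ZA i j ij; rewrite !mxE (negbTE ij) mulr0n addr0 ZA. Qed.

Lemma Zmatrix_scalar_sub (B : 'M[R]_N) (u : R) : nonneg_mx B -> Zmatrix (u%:M - B).
Proof. by move=> B0 i j ij; rewrite !mxE (negbTE ij) mulr0n sub0r oppr_le0. Qed.

Lemma scalar_sub_nonneg A (s : R) : Zmatrix A -> (forall i, A i i <= s) ->
  nonneg_mx (s%:M - A).
Proof.
move=> ZA As i j; rewrite !mxE; have [<-|ij] := eqVneq i j.
  by rewrite mulr1n subr_ge0.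
by rewrite mulr0n sub0r oppr_ge0 ZA.
Qed.

(* Compare [y] with the multiple of [x] that touches it from below. *)
Lemma Zmatrix_semipositive_monotone A x y : Zmatrix A ->
  (forall i, 0 < x i 0) -> (forall i, 0 < (A *m x) i 0) ->
  (forall i, 0 <= (A *m y) i 0) -> forall i, 0 <= y i 0.
Proof.
move=> ZA xp Axp Ay i; rewrite leNgt; apply/negP => yi.
have [j _ jmin] := @arg_minP _ R _ i xpredT (fun k : 'I_N => y k 0 / x k 0) isT.
set c := y j 0 / x j 0 in jmin.
have c0 : c < 0 by apply: le_lt_trans (jmin i isT) _; rewrite pmulr_llt0 ?invr_gt0.
have yk k : c * x k 0 <= y k 0 by rewrite -ler_pdivlMr //; exact: jmin.
have : (A *m y) j 0 <= c * (A *m x) j 0.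
  rewrite !mxE mulr_sumr; apply: ler_sum => k _.
  have [<-|jk] := eqVneq j k; first by rewrite mulrCA /c divfK ?gt_eqF.
  by rewrite mulrCA ler_wnM2l // ZA.
by rewrite leNgt => /negP; apply; apply: lt_le_trans (Ay j); rewrite nmulr_rlt0.
Qed.

Lemma Zmatrix_semipositive_unit A : Zmatrix A -> semipositive A -> A \in unitmx.
Proof.
move=> ZA [x xp Axp]; rewrite unitmxE unitfE -det_tr.
apply/negP => /det0P [v v_nz vA].
have Av : A *m v^T = 0 by rewrite -[A]trmxK -trmx_mul vA trmx0.
have mono := Zmatrix_semipositive_monotone ZA xp Axp.
case/negP: v_nz; apply/eqP/matrixP => a b; rewrite (ord1 a) mxE.
apply/le_anti/andP; split.
  have := mono (- v^T) _ b; rewrite !mxE oppr_ge0; apply => i.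
  by rewrite mulmxN Av !mxE oppr0.
by have := mono v^T _ b; rewrite mxE; apply => i; rewrite Av mxE.
Qed.

Lemma semipositive_nonsingular_Mmatrix A : Zmatrix A -> semipositive A ->
  nonsingular_Mmatrix A.
Proof.
move=> ZA Asp; split; last exact: Zmatrix_semipositive_unit.
split => //; case: Asp => x xp Axp.
pose s := \sum_i `|A i i|.
have s0 : 0 <= s by rewrite sumr_ge0.
have As i : A i i <= s.
  by rewrite (le_trans (ler_norm _)) // /s (bigD1 i) //= lerDl sumr_ge0.
have B0 := scalar_sub_nonneg ZA As.
exists s, (s%:M - A); split=> //; split; last by rewrite opprB addrC subrK.
apply: spectral_radius_le s0 _ => l /(root_char_normc_lt B0 xp) lt_s.
by apply/ltW/lt_s => i; rewrite mulmx_scalarBE; have := Axp i; lra.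
Qed.

Lemma semipositiveD_scalar A (d : R) : 0 <= d -> semipositive A ->
  semipositive (A + d%:M).
Proof.
move=> d0 [x xp Axp]; exists x => // i.
by rewrite mulmxD_scalarE ltr_wpDr ?mulr_ge0 // ltW.
Qed.

Lemma semipositive_open A : semipositive A ->
  exists2 e : R, 0 < e & semipositive (A - e%:M).
Proof.
case=> x xp Axp; pose S := \sum_i x i 0 / (A *m x) i 0.
have S0 : 0 <= S by apply: sumr_ge0 => i _; rewrite divr_ge0 // ltW.
exists (1 + S)^-1; first by rewrite invr_gt0; lra.
exists x => // i; have : x i 0 / (A *m x) i 0 <= S.
  by rewrite /S (bigD1 i) //= lerDl sumr_ge0 // => k _; rewrite divr_ge0 // ltW.
rewrite ler_pdivrMr // -raddfN mulmxD_scalarE mulNr subr_gt0.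
have eS : (1 + S)^-1 * (1 + S) = 1 by rewrite mulVf // gt_eqF //; lra.
have e0 : 0 < (1 + S)^-1 by rewrite invr_gt0; lra.
by have := Axp i; nra.
Qed.

(* [z := C^-1 1] satisfies [(C + d) z = 1 + d z >= 0] for small [d], so
   monotonicity of [C + d] makes [z] nonnegative, and then positive. *)
Lemma Zmatrix_semipositive_of_unit C : Zmatrix C -> C \in unitmx ->
  (forall d : R, 0 < d -> semipositive (C + d%:M)) -> semipositive C.
Proof.
move=> ZC Cu Cd; pose z : 'cV[R]_N := invmx C *m const_mx 1.
have Cz : C *m z = const_mx 1 by rewrite mulKVmx.
clearbody z.
pose S := \sum_k `|z k 0|; pose d := (1 + S)^-1.
have S0 : 0 <= S by rewrite sumr_ge0.
have d0 : 0 < d by rewrite invr_gt0; lra.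
have [x xp Cdx] := Cd d d0.
have z_ge0 : forall i, 0 <= z i 0.
  apply: (Zmatrix_semipositive_monotone (ZmatrixD_scalar d ZC) xp Cdx) => i.
  rewrite mulmxD_scalarE Cz mxE.
  have : `|z i 0| <= S by rewrite /S (bigD1 i) //= lerDl sumr_ge0.
  have : d * (1 + S) = 1 by rewrite mulVf // gt_eqF //; lra.
  have := ler_norm (- z i 0); rewrite normrN; nra.
exists z => [i|i]; last by rewrite Cz mxE.
rewrite lt_neqAle z_ge0 andbT; apply/negP => /eqP zi0.
have := mulmx_diag_offdiag C z i; rewrite Cz mxE -zi0 mulr0 add0r => Czi.
have : \sum_(k | k != i) C i k * z k 0 <= 0.
  by apply: sumr_le0 => k ki; apply: mulr_le0_ge0 => //; apply: ZC; rewrite eq_sym.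
by rewrite -Czi ler10.
Qed.

End Zmatrix.

Section ShiftedNonnegative.
Variables (R : realType) (n : nat) (B : 'M[R]_n.+1).
Hypothesis B0 : nonneg_mx B.

Let U := [set u : R | semipositive (u%:M - B)].

Lemma semipositive_shift_le (u v : R) : U u -> u <= v -> U v.
Proof.
move=> Uu uv; have vu0 : 0 <= v - u by rewrite subr_ge0.
rewrite /U /=; have -> : v%:M - B = u%:M - B + (v - u)%:M.
  by rewrite addrAC -raddfD [u + _]addrC subrK.
exact: semipositiveD_scalar.
Qed.

Lemma semipositive_shift_gt0 (u : R) : U u -> 0 < u.
Proof.
case=> x xp /(_ ord0); rewrite mulmx_scalarBE subr_gt0 => Bx.
suff : 0 <= (B *m x) ord0 0 by move=> /le_lt_trans /(_ Bx); rewrite pmulr_lgt0.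
by rewrite mxE sumr_ge0 // => j _; rewrite mulr_ge0 // ltW.
Qed.

Lemma semipositive_shift_large : U (1 + \sum_i \sum_j B i j).
Proof.
exists (const_mx 1) => i; first by rewrite mxE.
rewrite mulmx_scalarBE !mxE mulr1 subr_gt0.
rewrite (eq_bigr (fun j => B i j)) => [|j _]; last by rewrite mxE mulr1.
apply: ltr_pwDl => //; rewrite [leRHS](bigD1 i) //= lerDl.
by apply: sumr_ge0 => k _; apply: sumr_ge0.
Qed.

Let U_neq0 : U !=set0.
Proof. by exists (1 + \sum_i \sum_j B i j); exact: semipositive_shift_large. Qed.

Lemma semipositive_shift_gt_inf (u : R) : inf U < u -> U u.
Proof.
by move=> Uu; have [v Uv /ltW] := inf_lt U_neq0 Uu; exact: semipositive_shift_le.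
Qed.

Lemma semipositive_shift_of_unit (u : R) : inf U <= u -> u%:M - B \in unitmx -> U u.
Proof.
move=> Uu u_unit; apply: Zmatrix_semipositive_of_unit => //.
  exact: Zmatrix_scalar_sub.
move=> d d0; rewrite addrAC -raddfD; apply: semipositive_shift_gt_inf.
by rewrite ltr_pwDr.
Qed.

(* [U] is open and contains its infimum [u0] whenever [u0 - B] is invertible,
   so [u0] is an eigenvalue of [B]. *)
Lemma inf_semipositive_shift_le_spectral_radius : inf U <= spectral_radius B.
Proof.
have Ulb : has_lbound U by exists 0 => u /semipositive_shift_gt0/ltW.
apply: singular_shift_le_spectral_radius.
  by apply: lb_le_inf U_neq0 _ => u /semipositive_shift_gt0/ltW.
apply/negP => /(semipositive_shift_of_unit (lexx _)) /semipositive_open [e e0].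
by rewrite addrAC -raddfB => /(ge_inf Ulb); lra.
Qed.

End ShiftedNonnegative.

Lemma nonsingular_Mmatrix_semipositive (R : realType) (N : nat) (A : 'M[R]_N) :
  nonsingular_Mmatrix A -> semipositive A.
Proof.
case: N A => [|n] A; first by exists 0 => -[].
case=> [[_ [s [B [B0 [rho ->]]]]] Au].
have inf_le_s := le_trans (inf_semipositive_shift_le_spectral_radius B0) rho.
exact: semipositive_shift_of_unit B0 _ inf_le_s Au.
Qed.

Section MaximalSubsolution.
Variables (R : realType) (N : nat) (A : 'M[R]_N) (f : R -> R) (l u : 'cV[R]_N).
Hypotheses (ZA : Zmatrix A) (f_cont : forall t, 0 < t -> {for t, continuous f}).
Hypotheses (l_gt0 : forall i, 0 < l i 0) (l_le_u : forall i, l i 0 <= u i 0).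
Hypotheses (l_sub : forall i, (A *m l) i 0 <= f (l i 0))
           (u_super : forall i, f (u i 0) < (A *m u) i 0).

Definition subsolution (x : 'cV[R]_N) : Prop :=
  (forall i, l i 0 <= x i 0 <= u i 0) /\ (forall i, (A *m x) i 0 <= f (x i 0)).

Definition maximal_subsolution : 'cV[R]_N :=
  \col_i sup [set x i 0 | x in subsolution].
Local Notation m := maximal_subsolution.

Lemma subsolution_l : subsolution l.
Proof. by split => // i; rewrite lexx l_le_u. Qed.

Lemma has_sup_subsolution i : has_sup [set x i 0 | x in subsolution].
Proof.
split; first by exists (l i 0), l => //; exact: subsolution_l.
by exists (u i 0) => _ [x [xlu _] <-]; case/andP: (xlu i).
Qed.

Lemma le_maximal_subsolution x i : subsolution x -> x i 0 <= m i 0.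
Proof.
by move=> xS; rewrite mxE; have := sup_upper_bound (has_sup_subsolution i); apply; exists x.
Qed.

Lemma maximal_subsolution_le_u i : m i 0 <= u i 0.
Proof.
rewrite mxE; apply: ge_sup => [|_ [x [xlu _] <-]]; last by case/andP: (xlu i).
by exists (l i 0), l => //; exact: subsolution_l.
Qed.

Lemma maximal_subsolution_gt0 i : 0 < m i 0.
Proof. exact: lt_le_trans (l_gt0 i) (le_maximal_subsolution i subsolution_l). Qed.

Let row_gap_continuous i c t : 0 < t ->
  {for t, continuous (fun s => A i i * s + c - f s)}.
Proof.
move=> t0; apply: cvgB (f_cont t0).
by apply: cvgD; [apply: cvgMr; exact: cvg_id | exact: cvg_cst].
Qed.

(* Near the supremum in coordinate [i] there is a subsolution, whose row [i]
   only improves when the other coordinates are raised to those of [m]. *)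
Lemma maximal_subsolution_sub i : (A *m m) i 0 <= f (m i 0).
Proof.
rewrite mulmx_diag_offdiag; set c := \sum_(j | j != i) _.
rewrite leNgt -subr_gt0; apply/negP => gap.
have [e e0 gap_near] :=
  continuous_gt_ball (@row_gap_continuous i c _ (maximal_subsolution_gt0 i)) gap.
have [_ [x xS <-] mx] := sup_adherent e0 (has_sup_subsolution i).
have xm := le_maximal_subsolution i xS.
have := gap_near (x i 0); rewrite ger0_norm ?subr_ge0 // mxE ltrBlDr -ltrBlDl.
move=> /(_ mx); have := (xS.2 i); rewrite mulmx_diag_offdiag.
have : c <= \sum_(j | j != i) A i j * x j 0.
  by apply: Zmatrix_offdiag_le => // j _; exact: le_maximal_subsolution.
lra.
Qed.

Lemma maximal_subsolution_lt_u i : m i 0 < u i 0.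
Proof.
rewrite lt_neqAle maximal_subsolution_le_u andbT; apply/eqP => m_eq_u.
have : (A *m u) i 0 <= (A *m m) i 0.
  rewrite !mulmx_diag_offdiag m_eq_u lerD2l.
  by apply: Zmatrix_offdiag_le => // j _; exact: maximal_subsolution_le_u.
by have := u_super i; have := maximal_subsolution_sub i; rewrite m_eq_u; lra.
Qed.

(* Otherwise raising coordinate [i] of [m] a little gives a larger
   subsolution: row [i] by continuity, the other rows because [A i j <= 0]. *)
Lemma maximal_subsolution_eq i : (A *m m) i 0 = f (m i 0).
Proof.
apply/eqP; rewrite eq_le maximal_subsolution_sub /= leNgt; apply/negP.
rewrite mulmx_diag_offdiag -subr_lt0; set c := \sum_(j | j != i) _ => gap.
have [e e0 gap_near] :=
  continuous_lt_ball (@row_gap_continuous i c _ (maximal_subsolution_gt0 i)) gap.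
pose t := Num.min (m i 0 + e / 2) (u i 0).
have e2 : 0 < e / 2 by rewrite divr_gt0.
have mt : m i 0 < t by rewrite lt_min ltrDl e2 maximal_subsolution_lt_u.
have t_near : `|m i 0 - t| < e.
  have t_le : t <= m i 0 + e / 2 by rewrite ge_min lexx.
  have e2_lt : e / 2 < e by rewrite ltr_pdivrMr // ltr_pMr // ltr1n.
  by rewrite distrC ger0_norm; lra.
pose x : 'cV[R]_N := \col_k (if k == i then t else m k 0).
have xE k : x k 0 = if k == i then t else m k 0 by rewrite mxE.
clearbody x.
have m_le_x j : m j 0 <= x j 0 by rewrite xE; case: eqVneq => [->|_] //; exact: ltW.
suff : subsolution x by move/(le_maximal_subsolution i); rewrite xE eqxx leNgt mt.
have l_le_m k := le_maximal_subsolution k subsolution_l.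
split => k.
  rewrite xE; case: eqVneq => [->|_]; last by rewrite l_le_m maximal_subsolution_le_u.
  by rewrite (le_trans (l_le_m i) (ltW mt)) ge_min lexx orbT.
rewrite mulmx_diag_offdiag; have [->|ki] := eqVneq k i.
  have -> : \sum_(j | j != i) A i j * x j 0 = c.
    by apply: eq_bigr => j ji; rewrite xE (negbTE ji).
  by have := gap_near t t_near; rewrite xE eqxx; lra.
have xk : x k 0 = m k 0 by rewrite xE (negbTE ki).
rewrite xk; apply: le_trans _ (maximal_subsolution_sub k); rewrite mulmx_diag_offdiag lerD2l.
exact: Zmatrix_offdiag_le.
Qed.

End MaximalSubsolution.

Section PowerScaling.
Variable R : realType.

Lemma powR_split (p c : R) : 0 < c -> c = c `^ p * c `^ (1 - p).
Proof.
move=> c0; rewrite -powRD; last by apply/implyP => _; rewrite gt_eqF.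
by rewrite addrC subrK powRr1 // ltW.
Qed.

Lemma powR_mulr_lt (p c y a : R) : 0 < c -> 0 <= y -> 0 < a ->
  y `^ p / a < c `^ (1 - p) -> (c * y) `^ p < c * a.
Proof.
move=> c0 y0 a0; rewrite ltr_pdivrMr // => ya.
by rewrite powRM ?(ltW c0) // {2}(powR_split p c0) -mulrA ltr_pM2l ?powR_gt0.
Qed.

Lemma powR_mulr_ge (p c y a : R) : 0 < c -> 0 <= y -> 0 < a ->
  c `^ (1 - p) <= y `^ p / a -> c * a <= (c * y) `^ p.
Proof.
move=> c0 y0 a0; rewrite ler_pdivlMr // => ya.
by rewrite powRM ?(ltW c0) // {1}(powR_split p c0) -mulrA ler_wpM2l ?powR_ge0.
Qed.

Lemma positive_bounds (I : finType) (r : I -> R) : (forall i, 0 < r i) ->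
  exists k K : R, [/\ 0 < k, k <= K & forall i, k <= r i < K].
Proof.
move=> r0; have Sr : 0 <= \sum_i r i by apply: sumr_ge0 => i _; exact: ltW.
have Sr' : 0 <= \sum_i (r i)^-1 by apply: sumr_ge0 => i _; rewrite invr_ge0 ltW.
exists (1 + \sum_i (r i)^-1)^-1, (1 + \sum_i r i); split.
- by rewrite invr_gt0; lra.
- by rewrite (@le_trans _ _ 1) ?invf_le1 ?lerDl //; lra.
move=> i; have ri := r0 i; apply/andP; split.
  rewrite invf_ple ?posrE //; last lra.
  suff : (r i)^-1 <= \sum_j (r j)^-1 by lra.
  by rewrite (bigD1 i) //= lerDl sumr_ge0 // => j _; rewrite invr_ge0 ltW.
suff : r i <= \sum_j r j by lra.
by rewrite (bigD1 i) //= lerDl sumr_ge0 // => j _; exact: ltW.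
Qed.

End PowerScaling.

Lemma semipositive_powR_solution (R : realType) (N : nat) (A : 'M[R]_N) (p : R) :
  Zmatrix A -> p < 1 -> semipositive A ->
  exists x : 'cV[R]_N, (forall i, 0 < x i 0) /\ (forall i, (A *m x) i 0 = x i 0 `^ p).
Proof.
move=> ZA p1 [z zp Azp]; pose q := 1 - p.
have q0 : 0 < q by rewrite subr_gt0.
have qV0 : 0 <= q^-1 by rewrite invr_ge0 ltW.
pose r i := z i 0 `^ p / (A *m z) i 0.
have r0 i : 0 < r i by rewrite divr_gt0 ?powR_gt0.
have [k [K [k0 kK kr]]] := positive_bounds r0.
pose mu := k `^ q^-1; pose lam := K `^ q^-1.
have mu0 : 0 < mu by rewrite powR_gt0.
have lam0 : 0 < lam by rewrite powR_gt0 // (lt_le_trans k0 kK).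
have muq : mu `^ q = k by rewrite -powRrM mulVf ?gt_eqF // powRr1 ?ltW.
have lamq : lam `^ q = K by rewrite -powRrM mulVf ?gt_eqF // powRr1 // (le_trans (ltW k0)).
have scale c i : (A *m (c *: z)) i 0 = c * (A *m z) i 0 by rewrite -scalemxAr mxE.
have zE c i : (c *: z) i 0 = c * z i 0 by rewrite mxE.
have mu_le_lam i : (mu *: z) i 0 <= (lam *: z) i 0.
  rewrite !mxE; apply: ler_wpM2r; first exact: ltW.
  apply: (ge0_ler_powR qV0) => //.
    by rewrite nnegrE ltW.
  by rewrite nnegrE (le_trans (ltW k0)).
have l_gt0 i : 0 < (mu *: z) i 0 by rewrite mxE mulr_gt0.
have l_sub i : (A *m (mu *: z)) i 0 <= (mu *: z) i 0 `^ p.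
  rewrite scale zE; apply: powR_mulr_ge => //; first exact: ltW.
  by rewrite -/q muq; case/andP: (kr i).
have u_super i : (lam *: z) i 0 `^ p < (A *m (lam *: z)) i 0.
  rewrite scale zE; apply: powR_mulr_lt => //; first exact: ltW.
  by rewrite -/q lamq; case/andP: (kr i).
have f_cont t : 0 < t -> {for t, continuous (fun s : R => s `^ p)}.
  exact: powR_continuous.
exists (maximal_subsolution A (fun s : R => s `^ p) (mu *: z) (lam *: z)).
split => i; first exact: maximal_subsolution_gt0.
exact: maximal_subsolution_eq.
Qed.

Local Close Scope classical_set_scope.

Theorem theorem3p4 (R : realType) (N : nat) (A : 'M[R]_N) (p : R) :
  Zmatrix A -> p < 1 ->
  ((exists x : 'cV[R]_N, (forall i, 0 < x i 0) /\ A *m x = vpow x p)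
   <-> nonsingular_Mmatrix A).
Proof.
move=> ZA p1; split => [[x [xp Ax]] | /nonsingular_Mmatrix_semipositive Asp].
  apply: semipositive_nonsingular_Mmatrix => //; exists x => // i.
  by rewrite Ax mxE powR_gt0.
have [x [xp Ax]] := semipositive_powR_solution ZA p1 Asp.
by exists x; split => //; apply/matrixP => i j; rewrite (ord1 j) Ax mxE.
Qed.
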